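(* Let $G$ be a finite group, and let $\{g_1,\dots,g_k\}$ be a complete set of representatives of the conjugacy classes of $G$. Then the following are equivalent: (1) $G$ is a rational group. (2) The permutation characters $\{1_{\langle g_i\rangle}^G : i=1,\dots,k\}$ separate conjugacy classes of $G$. (3) $G$ has a finite collection $\mathcal{H}$ of subgroups such that the permutation characters $\{1_H^G : H\in\mathcal{H}\}$ separate conjugacy classes of $G$. (4) $G$ has a permutation character which separates the conjugacy classes of $G$; equivalently, $G$ has an action on a finite set $\Omega$ such that any two elements of $G$ fixing the same number of points of $\Omega$ are conjugate in $G$. *)

From HB Require Import structures.
From mathcomp Require Import all_boot all_order all_algebra all_fingroup all_solvable all_field all_character.
Set Implicit Arguments. Unset Strict Implicit. Unset Printing Implicit Defensive.
Import GRing.Theory Num.Theory.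
Local Open Scope ring_scope.
Local Open Scope group_scope.

(* A finite group G is rational iff every (irreducible, hence every) complex
   character of G takes only rational values. *)
Definition rational_group (gT : finGroupType) (G : {group gT}) : Prop :=
  forall (i : Iirr G) (x : gT), ('chi[G]_i x \in Crat)%R.

Definition perm_char (gT : finGroupType) (G H : {group gT}) : 'CF(G) :=
  'Ind[G, H] (1%R : 'CF(H)).

Definition separates_classes (gT : finGroupType) (G : {group gT})
    (S : seq 'CF(G)) : Prop :=
  forall x y, x \in G -> y \in G ->
    (forall phi, phi \in S -> phi x = phi y) -> y \in x ^: G.

From HB Require Import structures.
From mathcomp Require Import all_boot all_order all_algebra all_fingroup all_solvable all_field all_character.
Set Implicit Arguments. Unset Strict Implicit. Unset Printing Implicit Defensive.
Import GRing.Theory Num.Theory.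
Local Open Scope ring_scope.
Local Open Scope group_scope.

(* G is rational iff every x in G is conjugate to each power x^k with k
   coprime to o(x): Gal(Q(e^(2 pi i/|G|))/Q) acts on character values by
   chi(x) |-> chi(x^k), and irreducible characters separate classes.
   A permutation character 1_H^G is constant on such power classes, and
   1_H^G(y) <> 0 iff y is conjugate into H.  So if the 1_<g>^G agree at x and y,
   each of x, y is conjugate into the cycle of the other, which in a rational
   group forces x ~ y.  For (4), let G act on copies of the coset spaces G/<g>,
   the space of the i-th element g repeated B^i times with B > |G|: the number
   of points moved by x is a base-B numeral whose i-th digit counts the cosets
   of <g> moved by x, so it determines which cycles x is conjugate into. *)

Lemma char_rmorph_expg (gT : finGroupType) (G : {group gT}) (chi : 'CF(G))
    (nu : {rmorphism algC -> algC}) x k :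
    chi \is a character -> x \in G ->
    (forall z : algC, (z ^+ #[x] = 1)%R -> nu z = (z ^+ k)%R) ->
  nu (chi x) = chi (x ^+ k).
Proof.
move=> Nchi Gx nu_exp.
have sXG : <[x]> \subset G by rewrite cycle_subG.
rewrite -(cfResE chi sXG (cycle_id x)) -(cfResE chi sXG (mem_cycle x k)).
have [r ->] := char_sum_irr (cfRes_char <[x]>%G Nchi).
rewrite !sum_cfunE rmorph_sum; apply: eq_bigr => i _.
have lin_i : 'chi_i \is a linear_char by rewrite irr_cyclic_lin ?cycle_cyclic.
have Xx := cycle_id x.
by rewrite (lin_charX lin_i) // nu_exp -(lin_charX lin_i) // expg_order lin_char1.
Qed.

Lemma irr_separates_classes (gT : finGroupType) (G : {group gT}) x y :
    x \in G -> (forall i : Iirr G, 'chi_i x = 'chi_i y)%R -> y \in x ^: G.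
Proof.
move=> Gx chi_xy.
pose xG : 'CF(G) := '1_(x ^: G).
have : xG y = xG x.
  rewrite /xG (cfun_sum_cfdot '1_(x ^: G)) !sum_cfunE.
  by apply: eq_bigr => i _; rewrite !cfunE chi_xy.
rewrite !cfun_classE Gx class_refl /=.
by case: (y \in _) => // /eqP; rewrite eq_sym oner_eq0.
Qed.

Definition coprime_powers_conjugate (gT : finGroupType) (G : {group gT}) :=
  {in G, forall x k, coprime k #[x] -> x ^+ k \in x ^: G}.

Lemma rational_coprime_powers_conjugate (gT : finGroupType) (G : {group gT}) :
  rational_group G -> coprime_powers_conjugate G.
Proof.
move=> ratG x Gx k co_k_x; have [nu nu_exp] := Qn_aut_exists co_k_x.
apply: irr_separates_classes => // i.
by rewrite -(char_rmorph_expg (irr_char i) Gx nu_exp) aut_Crat.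
Qed.

Lemma coprime_powers_conjugate_rational (gT : finGroupType) (G : {group gT}) :
  coprime_powers_conjugate G -> rational_group G.
Proof.
move=> powG i x; have [Gx | /cfun0-> //] := boolP (x \in G).
have [Qn galQn [QnC gQnC [_ _ QnG]]] := group_num_field_exists G.
have [a Da] := QnG _ G _ (irr_char i) x (order_dvdG Gx); rewrite -Da.
suff /vlineP[q ->] : a \in 1%VS by rewrite rmorphZ_num rmorph1 mulr1 Crat_rat.
rewrite -(galois_fixedField galQn); apply/fixedFieldP; first exact: memvf.
move=> nu _; have [nuC DnuC] := gQnC nu; apply: (fmorph_inj QnC).
rewrite DnuC Da; have [z prim_z] := C_prim_root_exists (order_gt0 x).
have prim_nu_z : (#[x].-primitive_root (nuC z))%R by rewrite fmorph_primitive_root.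
have [k Dk] := prim_rootP prim_z (prim_expr_order prim_nu_z).
have co_k_x : coprime k #[x] by rewrite -(prim_root_exp_coprime k prim_z) -Dk.
have nu_exp (u : algC) : (u ^+ #[x] = 1)%R -> nuC u = (u ^+ k)%R.
  by move=> /(prim_rootP prim_z)[m ->]; rewrite rmorphXn /= Dk exprAC.
rewrite (char_rmorph_expg (irr_char i) Gx nu_exp).
by have /imsetP[g Gg ->] := powG x Gx k co_k_x; rewrite cfunJ.
Qed.

Lemma cycleX_coprime (gT : finGroupType) (x : gT) k :
  coprime k #[x] -> <[x ^+ k]> = <[x]>.
Proof.
move=> co_k_x; have /eqP <- // : generator <[x]> (x ^+ k).
by rewrite generator_coprime coprime_sym.
Qed.

Lemma mem_class_cycle_supports (gT : finGroupType) (G : {group gT}) x y :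
    coprime_powers_conjugate G -> x \in G ->
    y \in class_support <[x]> G -> x \in class_support <[y]> G ->
  y \in x ^: G.
Proof.
move=> powG Gx /imset2P[z t Xz Gt ->] /imset2P[w s Yw _ Dx].
have o_zx : #[z] = #[x].
  have := order_dvdG Yw; rewrite -orderE orderJ -(orderJ w s) -Dx => x_z.
  by apply/eqP; rewrite eqn_dvd x_z andbT [#[x]]orderE order_dvdG.
have [k Dz] := cycleP _ _ Xz.
have co_k_x : coprime k #[x].
  rewrite coprime_sym -generator_coprime -Dz /generator eq_sym eqEcard.
  by rewrite cycle_subG Xz -!orderE o_zx leqnn.
by rewrite Dz -(class_eqP (powG x Gx k co_k_x)) memJ_class.
Qed.

Lemma perm_charX_coprime (gT : finGroupType) (G H : {group gT}) x k :
  H \subset G -> coprime k #[x] -> perm_char G H (x ^+ k) = perm_char G H x.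
Proof.
move=> sHG co_k_x; rewrite /perm_char !cfIndE //; congr (_ * _)%R.
apply: eq_bigr => g _; rewrite !cfun1E conjXg -!cycle_subG cycleX_coprime //.
by rewrite orderJ.
Qed.

Lemma perm_char_neq0 (gT : finGroupType) (G H : {group gT}) x :
  H \subset G -> (perm_char G H x != 0)%R = (x \in class_support H G).
Proof.
move=> sHG; rewrite /perm_char cfIndE // mulf_eq0 invr_eq0 negb_or pnatr_eq0.
rewrite -lt0n cardG_gt0 /= class_supportEr.
apply/idP/bigcupP => [nz_x | [g Gg]]; last first.
  rewrite mem_conjg => Hx; rewrite (bigD1 g^-1) ?groupV //= cfun1E Hx.
  apply: lt0r_neq0; rewrite ltr_wpDr ?ltr01 // sumr_ge0 // => h _.
  by rewrite cfun1E ler0n.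
have [|g /andP[Gg]] := psumr_neq0P _ (elimN eqP nz_x).
  by move=> g _; rewrite cfun1E ler0n.
rewrite cfun1E ltr0n lt0b => Hxg.
by exists g^-1; rewrite ?groupV ?mem_conjgV.
Qed.

Lemma base_digits_inj (B m : nat) (a b : 'I_m -> nat) :
    (forall i, a i < B)%N -> (forall i, b i < B)%N ->
    (\sum_(i < m) B ^ i * a i = \sum_(i < m) B ^ i * b i)%N ->
  a =1 b.
Proof.
elim: m a b => [|m IH] a b lt_aB lt_bB eq_ab i; first by case: i.
have B_gt0 : (0 < B)%N by apply: leq_ltn_trans (lt_aB i).
have split_low (c : 'I_m.+1 -> nat) : (\sum_(i < m.+1) B ^ i * c i =
    c ord0 + B * \sum_(i < m) B ^ i * c (lift ord0 i))%N.
  rewrite big_ord_recl expn0 mul1n big_distrr; congr (_ + _)%N.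
  by apply: eq_bigr => j _; rewrite /= expnS mulnA.
rewrite !split_low in eq_ab.
have eq_ab0 : a ord0 = b ord0.
  have := congr1 (modn^~ B) eq_ab; rewrite /= ![(_ + B * _)%N]addnC.
  by rewrite ![(B * _)%N]mulnC !modnMDl !modn_small.
move: eq_ab; rewrite eq_ab0 => /addnI /eqP; rewrite eqn_mul2l eqn0Ngt B_gt0 /=.
move=> /eqP /(IH _ _ (fun=> lt_aB _) (fun=> lt_bB _)) eq_ab'.
by case: (unliftP ord0 i) => [j -> | ->]; [apply: eq_ab' | ].
Qed.

Definition moved_rcosets (gT : finGroupType) (G : {group gT}) (H : {set gT}) x :=
  [set A in rcosets H G | A :* x != A].

Lemma moved_rcosets_sub (gT : finGroupType) (G : {group gT}) (H : {set gT}) x :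
  moved_rcosets G H x \subset rcosets H G.
Proof. by apply/subsetP => A; rewrite inE => /andP[]. Qed.

Lemma card_moved_rcosets (gT : finGroupType) (G : {group gT}) (H : {set gT}) x :
  (#|moved_rcosets G H x| <= #|G|)%N.
Proof. exact: leq_trans (subset_leq_card (moved_rcosets_sub G H x)) (leq_imset_card _ _). Qed.

Lemma class_support_moved_rcosets (gT : finGroupType) (G H : {group gT}) y :
  (y \in class_support H G) = (#|moved_rcosets G H y| < #|rcosets H G|)%N.
Proof.
rewrite -[RHS]andTb -(moved_rcosets_sub G H y) -properEcard.
apply/imset2P/properP => [[h t Hh Gt ->] | [_ [_ /rcosetsP[t Gt ->]]]].
  split; first exact: moved_rcosets_sub.
  exists (H :* t); first by apply/rcosetsP; exists t.
  rewrite inE negb_and negbK conjgE -!rcosetM !mulgA mulgV mul1g.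
  by rewrite rcosetM (rcoset_id Hh) eqxx orbT.
have Rt : H :* t \in rcosets H G by apply/rcosetsP; exists t.
rewrite inE Rt negbK -rcosetM => /eqP/rcoset_eqP.
rewrite mem_rcoset => Hty; exists (t * y * t^-1) t => //.
by rewrite conjgE !mulgA mulVg mul1g mulgKV.
Qed.

Section CosetCopies.

Variables (gT : finGroupType) (G : {group gT}) (m B : nat).
Variable C : 'I_m -> {group gT}.

(* A point (i, j, A) is live when j < B ^ i and A is a right coset of C i;
   the other points pad the type and are fixed by G. *)
Definition coset_copies := ('I_m * 'I_(B ^ m) * {set gT})%type.

Definition live_copy (p : coset_copies) :=
  (p.1.2 < B ^ p.1.1)%N && (p.2 \in rcosets (C p.1.1) G).

Definition coset_copies_act (p : coset_copies) x :=
  if (x \in G) && live_copy p then (p.1, p.2 :* x) else p.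

Lemma live_copy_act p x : x \in G -> live_copy p -> live_copy (p.1, p.2 :* x).
Proof.
move=> Gx /andP[lt_p /rcosetsP[y Gy Dp]]; rewrite /live_copy /= lt_p Dp.
by apply/rcosetsP; exists (y * x); rewrite ?groupM // rcosetM.
Qed.

Lemma coset_copies_is_action : is_action G coset_copies_act.
Proof.
split=> [x p q | p x y Gx Gy]; rewrite /coset_copies_act.
  case Gx: (x \in G) => //=.
  case: (boolP (live_copy p)) => live_p; case: (boolP (live_copy q)) => live_q.
  - by case: p q {live_p live_q} => [? ?] [? ?] [-> /rcoset_inj ->].
  - by move=> eq_pq; rewrite -eq_pq live_copy_act in live_q.
  - by move=> eq_pq; rewrite eq_pq live_copy_act in live_p.
  - by [].
rewrite Gx Gy groupM //=; have [live_p | /negbTE-> //] := boolP (live_copy p).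
by rewrite live_copy_act //= rcosetM.
Qed.

Definition coset_copies_action := Action coset_copies_is_action.

Lemma card_coset_copies_moved x : (0 < B)%N -> x \in G ->
  #|~: 'Fix_coset_copies_action[x]| = (\sum_(i < m) B ^ i * #|moved_rcosets G (C i) x|)%N.
Proof.
move=> B_gt0 Gx.
have movedE (i : 'I_m) (j : 'I_(B ^ m)) A : ((i, j, A) \in ~: 'Fix_coset_copies_action[x]) =
    (j < B ^ i)%N && (A \in moved_rcosets G (C i) x).
  rewrite in_setC (sameP afix1P eqP) /= /coset_copies_act Gx /live_copy /= inE.
  by case: (_ < _)%N; case: (A \in _); rewrite /= ?eqxx // !xpair_eqE !eqxx.
set S := ~: _.
rewrite -sum1_card big_mkcond /= (eq_bigr (fun p => nat_of_bool ((p.1, p.2) \in S))); last first.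
  by case=> [[i j] A] _; case: (_ \in _).
rewrite -(pair_bigA _ (fun ij A => nat_of_bool ((ij, A) \in S))).
rewrite (eq_bigr (fun ij => \sum_A nat_of_bool ((ij.1, ij.2, A) \in S))); last by case.
rewrite -(pair_bigA _ (fun i j => \sum_A nat_of_bool ((i, j, A) \in S))) /=.
apply: eq_bigr => i _.
have sum_j (j : 'I_(B ^ m)) : (\sum_A nat_of_bool ((i, j, A) \in S))%N
    = ((j < B ^ i) * #|moved_rcosets G (C i) x|)%N.
  under eq_bigr do rewrite movedE.
  case: (_ < _)%N; last by rewrite big1.
  by rewrite mul1n -sum1_card [RHS]big_mkcond; apply: eq_bigr => A _; case: (_ \in _).
under eq_bigr do rewrite sum_j.
rewrite -big_distrl /= -big_mkcond /=; congr (_ * _)%N.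
by rewrite (big_ord_narrow (leq_pexp2l B_gt0 (ltnW (ltn_ord i)))) sum1_card card_ord.
Qed.

Lemma coset_copies_fix_class_support x y :
    (#|G| < B)%N -> x \in G -> y \in G ->
    #|'Fix_coset_copies_action[x]| = #|'Fix_coset_copies_action[y]| ->
  forall i, (x \in class_support (C i) G) = (y \in class_support (C i) G).
Proof.
move=> lt_GB Gx Gy eq_fix i.
have B_gt0 : (0 < B)%N by apply: leq_ltn_trans lt_GB.
have eq_moved : #|~: 'Fix_coset_copies_action[x]| = #|~: 'Fix_coset_copies_action[y]|.
  by apply/eqP; rewrite -(eqn_add2l #|'Fix_coset_copies_action[x]|) {2}eq_fix !cardsC.
rewrite !card_coset_copies_moved // in eq_moved.
have lt_moved z j : (#|moved_rcosets G (C j) z| < B)%N.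
  exact: leq_ltn_trans (card_moved_rcosets G (C j) z) lt_GB.
by rewrite !class_support_moved_rcosets (base_digits_inj (lt_moved x) (lt_moved y) eq_moved).
Qed.

End CosetCopies.

Lemma transversal_perm_chars_class_support (gT : finGroupType) (G : {group gT})
    (R : {set gT}) x y :
    is_transversal R (classes G) G -> x \in G ->
    (forall phi, phi \in [seq perm_char G <[g]>%G | g <- enum R] -> phi x = phi y) ->
  y \in class_support <[x]> G.
Proof.
move=> trR Gx eq_xy; pose g := transversal_repr 1 R (x ^: G).
have xG_g : g \in x ^: G by exact: repr_mem_pblock trR 1 _ (mem_classes Gx).
have Rg : g \in R by exact: repr_mem_transversal trR 1 _ (mem_classes Gx).
have sgG : <[g]> \subset G by rewrite cycle_subG (subsetP (transversal_sub trR)).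
have [h Gh Dg] := imsetP xG_g.
have suppE : class_support <[g]> G = class_support <[x]> G.
  by rewrite Dg cycleJ class_supportGidl.
rewrite -suppE -perm_char_neq0 // -eq_xy ?perm_char_neq0 ?suppE ?mem_class_support ?cycle_id //.
by apply: map_f; rewrite mem_enum.
Qed.

Lemma perm_chars_coprime_powers_conjugate (gT : finGroupType) (G : {group gT})
    (Hs : seq {group gT}) :
    all (fun H : {group gT} => H \subset G) Hs ->
    separates_classes [seq perm_char G H | H <- Hs] ->
  coprime_powers_conjugate G.
Proof.
move=> /allP sHsG sepG x Gx k co_k_x; apply: sepG; rewrite ?groupX //.
by move=> _ /mapP[H HsH ->]; rewrite perm_charX_coprime ?sHsG.
Qed.

Lemma fix_separating_coprime_powers_conjugate (gT : finGroupType) (G : {group gT})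
    (T : finType) (to : action G T) :
    (forall x y, x \in G -> y \in G -> #|'Fix_to[x]| = #|'Fix_to[y]| -> y \in x ^: G) ->
  coprime_powers_conjugate G.
Proof.
move=> sep_to x Gx k co_k_x; apply: sep_to; rewrite ?groupX //.
by rewrite -!afix_cycle_in ?groupX // cycleX_coprime.
Qed.

Lemma coprime_powers_fix_separating_action (gT : finGroupType) (G : {group gT}) :
    coprime_powers_conjugate G ->
  exists (T : finType) (to : action G T),
    forall x y, x \in G -> y \in G -> #|'Fix_to[x]| = #|'Fix_to[y]| -> y \in x ^: G.
Proof.
move=> powG; pose C (i : 'I_#|gT|) := <[enum_val i]>%G.
exists (coset_copies gT #|gT| #|G|.+1), (coset_copies_action G #|G|.+1 C).
move=> x y Gx Gy eq_fix.
have supp_xy := coset_copies_fix_class_support (ltnSn _) Gx Gy eq_fix.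
have supp_z z : (x \in class_support <[z]> G) = (y \in class_support <[z]> G).
  by have := supp_xy (enum_rank z); rewrite /C /= enum_rankK.
apply: (mem_class_cycle_supports powG Gx).
  by rewrite -supp_z mem_class_support ?cycle_id.
by rewrite supp_z mem_class_support ?cycle_id.
Qed.

Unset Implicit Arguments.
Set Strict Implicit.

Theorem theorem1p6 (gT : finGroupType) (G : {group gT}) (R : {set gT})
    (hR : is_transversal R (classes G) G) :
  [<-> rational_group G;
       separates_classes [seq perm_char G <[g]>%G | g <- enum R];
       exists Hs : seq {group gT},
         all (fun H : {group gT} => H \subset G) Hs /\
         separates_classes [seq perm_char G H | H <- Hs];
       exists (T : finType) (to : action G T),
         forall x y, x \in G -> y \in G ->
           #|'Fix_to[x]| = #|'Fix_to[y]| -> y \in x ^: G].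
Proof.
split=> [/rational_coprime_powers_conjugate powG x y Gx Gy eq_xy |].
  apply: (mem_class_cycle_supports powG Gx).
    exact: transversal_perm_chars_class_support hR Gx eq_xy.
  by apply: (transversal_perm_chars_class_support hR Gy) => phi /eq_xy->.
split=> [sepR | ].
  exists [seq <[g]>%G | g <- enum R]; split; last by rewrite -map_comp.
  apply/allP => H /mapP[g]; rewrite mem_enum => Rg ->.
  by rewrite cycle_subG (subsetP (transversal_sub hR)).
split=> [[Hs [sHsG sepHs]] | [T [to sep_to]]].
  exact: coprime_powers_fix_separating_action (perm_chars_coprime_powers_conjugate sHsG sepHs).
exact: coprime_powers_conjugate_rational (fix_separating_coprime_powers_conjugate sep_to).
Qed.
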